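(* Let $\bar f:[a,b]\to\mathbb{R}_\mathcal{I}$, $\bar f(x)=[f_l(x),f_r(x)]$. Then $\bar f$ is continuous on $[a,b]$ if and only if $f_l$ and $f_r$ are continuous on $[a,b]$.
   Context: An interval number is a closed interval $\bar a=[a_l,a_r]$ with $a_l<a_r$ real; $\mathbb{R}_\mathcal{I}$ is the set of interval numbers. Write $a_c=(a_l+a_r)/2$, $a_w=(a_r-a_l)/2>0$. Distance: $d(\bar a,\bar b)=\sqrt{(a_c-b_c)^2+(\ln a_w-\ln b_w)^2}$. $\bar f$ is continuous at $x\in[a,b]$ if for every $\varepsilon>0$ there is $\delta>0$ with $d(\bar f(x),\bar f(y))<\varepsilon$ for all $y\in[a,b]$ with $|y-x|<\delta$; continuous on $[a,b]$ if continuous at each point. *)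

From Stdlib Require Import Reals.
Open Scope R_scope.

Record interval_number : Type := mkI {
  il : R;
  ir : R;
  i_lt : il < ir
}.

Definition ic (A : interval_number) : R := (il A + ir A) / 2.
Definition iw (A : interval_number) : R := (ir A - il A) / 2.

Definition idist (A B : interval_number) : R :=
  sqrt ((ic A - ic B) ^ 2 + (ln (iw A) - ln (iw B)) ^ 2).

(* fbar : [a,b] -> R_I, modelled as a total function of which only the
   values on [a,b] matter. *)
Definition icont_at (a b : R) (F : R -> interval_number) (x : R) : Prop :=
  forall eps, 0 < eps -> exists delta, 0 < delta /\
    forall y, a <= y <= b -> Rabs (y - x) < delta -> idist (F x) (F y) < eps.

Definition icont_on (a b : R) (F : R -> interval_number) : Prop :=
  forall x, a <= x <= b -> icont_at a b F x.

Definition rcont_at (a b : R) (f : R -> R) (x : R) : Prop :=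
  forall eps, 0 < eps -> exists delta, 0 < delta /\
    forall y, a <= y <= b -> Rabs (y - x) < delta -> Rabs (f x - f y) < eps.

Definition rcont_on (a b : R) (f : R -> R) : Prop :=
  forall x, a <= x <= b -> rcont_at a b f x.

(* In the coordinates (a_c, ln a_w) the distance d is the Euclidean one, so
   continuity of fbar means continuity of x |-> c(x) and x |-> ln w(x).  Since
   ln and exp are continuous, the latter is equivalent to continuity of w, and
   (c, w) and (f_l, f_r) are invertible linear transforms of each other:
   f_l = c - w, f_r = c + w. *)
From Stdlib Require Import Reals Lra.
Open Scope R_scope.

Lemma Rabs_le_sqrt_plus_sq u v : Rabs u <= sqrt (u ^ 2 + v ^ 2).
Proof.
  rewrite <- sqrt_Rsqr_abs. apply sqrt_le_1_alt. unfold Rsqr. nra.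
Qed.

Lemma sqrt_plus_sq_le_Rabs_add u v : sqrt (u ^ 2 + v ^ 2) <= Rabs u + Rabs v.
Proof.
  pose proof (Rabs_pos u); pose proof (Rabs_pos v).
  rewrite <- (sqrt_Rsqr (Rabs u + Rabs v)) by lra.
  apply sqrt_le_1_alt. unfold Rsqr.
  rewrite <- (pow2_abs u), <- (pow2_abs v). nra.
Qed.

Lemma iw_pos A : 0 < iw A.
Proof. unfold iw. pose proof (i_lt A). lra. Qed.

Section RelativeContinuity.

Variables a b x : R.

Lemma rcont_at_ext f g : (forall t, f t = g t) -> rcont_at a b f x -> rcont_at a b g x.
Proof.
  intros Efg Cf e He. destruct (Cf e He) as [d [Hd Hf]].
  exists d. split; auto.
  intros y Hy Hyx. rewrite <- !Efg. auto.
Qed.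

Lemma rcont_at_lincomb f g (p q : R) : rcont_at a b f x -> rcont_at a b g x ->
  rcont_at a b (fun t => p * f t + q * g t) x.
Proof.
  intros Cf Cg e He.
  pose proof (Rabs_pos p); pose proof (Rabs_pos q).
  set (e' := e / (2 * (Rabs p + Rabs q + 1))).
  assert (He' : 0 < e') by (apply Rdiv_lt_0_compat; lra).
  assert (Ee' : (Rabs p + Rabs q + 1) * e' = e / 2) by (unfold e'; field; lra).
  destruct (Cf e' He') as [d1 [Hd1 Hf]], (Cg e' He') as [d2 [Hd2 Hg]].
  exists (Rmin d1 d2). split; [apply Rmin_pos; auto |].
  intros y Hy Hyx.
  specialize (Hf y Hy (Rlt_le_trans _ _ _ Hyx (Rmin_l _ _))).
  specialize (Hg y Hy (Rlt_le_trans _ _ _ Hyx (Rmin_r _ _))).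
  replace (p * f x + q * g x - (p * f y + q * g y))
    with (p * (f x - f y) + q * (g x - g y)) by ring.
  eapply Rle_lt_trans; [apply Rabs_triang |]. rewrite !Rabs_mult.
  assert (Rabs p * Rabs (f x - f y) <= Rabs p * e') by (apply Rmult_le_compat_l; lra).
  assert (Rabs q * Rabs (g x - g y) <= Rabs q * e') by (apply Rmult_le_compat_l; lra).
  nra.
Qed.

Lemma rcont_at_comp (h : R -> R) (D : R -> Prop) f :
  continue_in h D (f x) -> (forall t, D (f t)) ->
  rcont_at a b f x -> rcont_at a b (fun t => h (f t)) x.
Proof.
  intros Ch Df Cf e He.
  destruct (Ch e He) as [al [Hal Hh]], (Cf al Hal) as [d [Hd Hf]].
  exists d. split; auto.
  intros y Hy Hyx.
  (* [continue_in] says nothing at the point [f x] itself. *)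
  destruct (Req_dec (f y) (f x)) as [E | E].
  - rewrite E, Rminus_diag, Rabs_R0. auto.
  - rewrite Rabs_minus_sym. apply (Hh (f y)). split.
    + split; auto.
    + simpl. unfold R_dist. rewrite Rabs_minus_sym. auto.
Qed.

Lemma rcont_at_ln_iff g : (forall t, 0 < g t) ->
  rcont_at a b (fun t => ln (g t)) x <-> rcont_at a b g x.
Proof.
  intros Hg. split; intros Cg.
  - apply rcont_at_ext with (fun t => exp (ln (g t))).
    { intros t. apply exp_ln, Hg. }
    apply (rcont_at_comp exp (fun _ => True)); auto.
    apply derivable_continuous_pt, derivable_pt_exp.
  - apply (rcont_at_comp ln (fun y => 0 < y)); auto.
    apply ln_continue, Hg.
Qed.

Lemma rcont_at_half_sum_diff_iff f g :
  rcont_at a b (fun t => (f t + g t) / 2) x /\ rcont_at a b (fun t => (g t - f t) / 2) x <->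
  rcont_at a b f x /\ rcont_at a b g x.
Proof.
  split; intros [Cs Cd]; split.
  - apply rcont_at_ext with (fun t => 1 * ((f t + g t) / 2) + (-1) * ((g t - f t) / 2)).
    { intros t. field. }
    apply rcont_at_lincomb; auto.
  - apply rcont_at_ext with (fun t => 1 * ((f t + g t) / 2) + 1 * ((g t - f t) / 2)).
    { intros t. field. }
    apply rcont_at_lincomb; auto.
  - apply rcont_at_ext with (fun t => / 2 * f t + / 2 * g t).
    { intros t. field. }
    apply rcont_at_lincomb; auto.
  - apply rcont_at_ext with (fun t => (- / 2) * f t + / 2 * g t).
    { intros t. field. }
    apply rcont_at_lincomb; auto.
Qed.

Lemma icont_at_iff_center_logwidth (F : R -> interval_number) :
  icont_at a b F x <->
  rcont_at a b (fun t => ic (F t)) x /\ rcont_at a b (fun t => ln (iw (F t))) x.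
Proof.
  split.
  - intros C. split; intros e He; destruct (C e He) as [d [Hd HF]];
      exists d; split; auto; intros y Hy Hyx;
      apply Rle_lt_trans with (2 := HF y Hy Hyx).
    + unfold idist. apply Rabs_le_sqrt_plus_sq.
    + unfold idist. rewrite Rplus_comm. apply Rabs_le_sqrt_plus_sq.
  - intros [Cc Cw] e He.
    destruct (Cc (e / 2) ltac:(lra)) as [d1 [Hd1 Hc]].
    destruct (Cw (e / 2) ltac:(lra)) as [d2 [Hd2 Hw]].
    exists (Rmin d1 d2). split; [apply Rmin_pos; auto |].
    intros y Hy Hyx.
    specialize (Hc y Hy (Rlt_le_trans _ _ _ Hyx (Rmin_l _ _))).
    specialize (Hw y Hy (Rlt_le_trans _ _ _ Hyx (Rmin_r _ _))).
    eapply Rle_lt_trans; [apply sqrt_plus_sq_le_Rabs_add | lra].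
Qed.

Lemma icont_at_iff (F : R -> interval_number) :
  icont_at a b F x <->
  rcont_at a b (fun t => il (F t)) x /\ rcont_at a b (fun t => ir (F t)) x.
Proof.
  rewrite icont_at_iff_center_logwidth, rcont_at_ln_iff
    by (intros t; apply iw_pos).
  apply rcont_at_half_sum_diff_iff.
Qed.

End RelativeContinuity.

Theorem theorem3p5 (a b : R) (F : R -> interval_number) :
  icont_on a b F <->
  (rcont_on a b (fun x => il (F x)) /\ rcont_on a b (fun x => ir (F x))).
Proof.
  unfold icont_on, rcont_on. split.
  - intros C. split; intros x Hx; apply (icont_at_iff a b x F), C, Hx.
  - intros [Cl Cr] x Hx. apply icont_at_iff. auto.
Qed.
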